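(* Consider the setting and Algorithm DRDGA described in the context, under Assumptions A1 and A2. Suppose the stepsize sequence $\{\beta[t]\}_{t>0}$ is positive, non-increasing and satisfies $\lim_{t\to\infty}\beta[t]=0$. Then there is a positive constant $D$ such that for all $i=1,\dots,m$, $$\sup_{t}\|\lambda_i[t]\|\le D.$$
   Context: Problem: $m$ agents; agent $i$ has a function $f_i:\mathbb{R}^{n_i}\to\mathbb{R}$, a set $\mathbf{X}_i\subseteq\mathbb{R}^{n_i}$, a matrix $A_i\in\mathbb{R}^{p\times n_i}$ and a vector $\mathbf{b}_i\in\mathbb{R}^p$. The problem is $\min_{\mathbf{x}_i\in\mathbf{X}_i,\,i=1,\dots,m} F(\mathbf{x}):=\sum_{i=1}^m f_i(\mathbf{x}_i)$ subject to $\sum_{i=1}^m (A_i\mathbf{x}_i-\mathbf{b}_i)=0$, where $\mathbf{x}=(\mathbf{x}_1,\dots,\mathbf{x}_m)$. Regularization parameters $\gamma_i>0$ are fixed; $\mathcal{L}_i(\mathbf{x}_i,\lambda)=f_i(\mathbf{x}_i)+\lambda^\top(A_i\mathbf{x}_i-\mathbf{b}_i)-\frac{\gamma_i}{2}\lambda^\top\lambda$ for $\lambda\in\mathbb{R}^p$. Assumption A1: each $f_i$ is $\tau_i$-strongly convex ($\tau_i>0$), and each $\mathbf{X}_i$ is nonempty, convex and compact. (Consequently there are constants $G_i>0$ with $\|A_i\mathbf{x}_i-\mathbf{b}_i\|\le G_i$ for all $\mathbf{x}_i\in\mathbf{X}_i$.) Network: a sequence of directed graphs $\mathcal{G}[t]=(\{1,\dots,m\},\mathcal{E}[t])$.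 Out-neighbors $\mathcal{N}_i^{out}[t]=\{j:(i,j)\in\mathcal{E}[t]\}\cup\{i\}$, in-neighbors $\mathcal{N}_i^{in}[t]=\{j:(j,i)\in\mathcal{E}[t]\}\cup\{i\}$, out-degree $d_i[t]=|\mathcal{N}_i^{out}[t]|$. Weight matrix $W[t]$: $(W[t])_{ij}=1/d_j[t]$ if $j\in\mathcal{N}_i^{in}[t]$ and $0$ otherwise (so $W[t]$ is column stochastic). Assumption A2: each agent $i$ knows $d_i[t]$ for every $t$, and there is an integer $B_c>0$ such that for every $k\ge0$ the graph with vertex set $\{1,\dots,m\}$ and edge set $\bigcup_{l=kB_c}^{(k+1)B_c-1}\mathcal{E}[l]$ is strongly connected. Algorithm DRDGA: initialize $\theta_i[0]\in\mathbb{R}^p$ arbitrary and $\rho_i[0]=1$ for all $i$. For $t=0,1,2,\dots$ and each $i$: $\mathbf{u}_i[t+1]=\sum_{j=1}^m (W[t])_{ij}\theta_j[t]$; $\rho_i[t+1]=\sum_{j=1}^m (W[t])_{ij}\rho_j[t]$; $\lambda_i[t+1]=\mathbf{u}_i[t+1]/\rho_i[t+1]$; $\mathbf{x}_i[t+1]=\arg\min_{\mathbf{x}_i\in\mathbf{X}_i}\mathcal{L}_i(\mathbf{x}_i,\lambda_i[t+1])$; $\theta_i[t+1]=\mathbf{u}_i[t+1]+\beta[t+1]\big(A_i\mathbf{x}_i[t+1]-\mathbf{b}_i-\gamma_i\lambda_i[t+1]\big)$, where $\beta[t]>0$ are stepsizes. *)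

From mathcomp Require Import all_boot.
From Stdlib Require Import Reals.
Set Implicit Arguments. Unset Strict Implicit. Unset Printing Implicit Defensive.

Local Open Scope R_scope.

Definition vec (n : nat) := 'I_n -> R.

Definition vsum (n : nat) (F : 'I_n -> R) : R := \big[Rplus/0%R]_(k < n) F k.
Definition dot (n : nat) (u v : vec n) : R := vsum (fun k => u k * v k).
Definition vnorm (n : nat) (u : vec n) : R := sqrt (dot u u).
Definition vadd (n : nat) (u v : vec n) : vec n := fun k => u k + v k.
Definition vsub (n : nat) (u v : vec n) : vec n := fun k => u k - v k.
Definition vscale (n : nat) (a : R) (u : vec n) : vec n := fun k => a * u k.
Definition matvec (p n : nat) (A : 'I_p -> 'I_n -> R) (x : vec n) : vec p :=
  fun r => vsum (fun c => A r c * x c).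

Definition strongly_convex (n : nat) (tau : R) (f : vec n -> R) : Prop :=
  forall (x y : vec n) (a : R), 0 <= a <= 1 ->
    f (vadd (vscale a x) (vscale (1 - a) y))
      <= a * f x + (1 - a) * f y - tau / 2 * a * (1 - a) * (vnorm (vsub x y))^2.

Definition nonempty_set (n : nat) (X : vec n -> Prop) : Prop := exists x, X x.

Definition convex_set (n : nat) (X : vec n -> Prop) : Prop :=
  forall (x y : vec n) (a : R), X x -> X y -> 0 <= a <= 1 ->
    X (vadd (vscale a x) (vscale (1 - a) y)).

Definition open_set (n : nat) (U : vec n -> Prop) : Prop :=
  forall x, U x -> exists eps, 0 < eps /\ forall y, vnorm (vsub y x) < eps -> U y.

Definition compact_set (n : nat) (X : vec n -> Prop) : Prop :=
  forall (I : Type) (U : I -> vec n -> Prop),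
    (forall i, open_set (U i)) ->
    (forall x, X x -> exists i, U i x) ->
    exists l : list I, forall x, X x -> exists i, List.In i l /\ U i x.

Definition lagr (n p : nat) (f : vec n -> R) (A : 'I_p -> 'I_n -> R) (b : vec p)
    (gamma : R) (x : vec n) (lam : vec p) : R :=
  f x + dot lam (vsub (matvec A x) b) - gamma / 2 * dot lam lam.

Definition is_argmin (n : nat) (X : vec n -> Prop) (L : vec n -> R) (x : vec n) : Prop :=
  X x /\ forall y, X y -> L x <= L y.

(* Time-varying digraph: E t i j = true iff (i,j) \in E[t]. *)
Definition out_nbrs (m : nat) (E : nat -> 'I_m -> 'I_m -> bool) (t : nat) (i : 'I_m)
  : {set 'I_m} := [set j | E t i j || (j == i)].
Definition in_nbrs (m : nat) (E : nat -> 'I_m -> 'I_m -> bool) (t : nat) (i : 'I_m)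
  : {set 'I_m} := [set j | E t j i || (j == i)].
Definition outdeg (m : nat) (E : nat -> 'I_m -> 'I_m -> bool) (t : nat) (i : 'I_m) : nat :=
  #|out_nbrs E t i|.

Definition W (m : nat) (E : nat -> 'I_m -> 'I_m -> bool) (t : nat) (i j : 'I_m) : R :=
  if j \in in_nbrs E t i then / INR (outdeg E t j) else 0.

Definition window_rel (m : nat) (E : nat -> 'I_m -> 'I_m -> bool) (B k : nat) : rel 'I_m :=
  fun a b => [exists l : 'I_B, E (k * B + l)%nat a b].

Definition strongly_connected (m : nat) (r : rel 'I_m) : Prop :=
  forall a b : 'I_m, connect r a b.

(* The push-sum weights stay bounded below: column stochasticity keeps their total equal
   to m, so some weight is at least 1, and since every window of B steps is strongly
   connected, after m - 1 windows every node holds at least (1/m)^(mB) of it.  Once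
   beta[t] gamma_i <= rho_i[t], which eventually holds because beta[t] -> 0, the update
   theta = rho lam + beta (g - gamma lam) is a nonnegative combination of lam and g/gamma
   with total weight rho, where g = A x - b is bounded because X is compact.  Hence
   |theta| <= M rho coordinatewise, mixing by W preserves this, and dividing by rho gives
   |lam| <= M again, with M := max(bound up to that time, max_i G / gamma_i). *)

From Pilot Require Import Defs.
From HB Require Import structures.
From mathcomp Require Import all_boot zify.
From Stdlib Require Import Reals Lra Lia.
Set Implicit Arguments. Unset Strict Implicit.
Local Open Scope R_scope.

HB.instance Definition _ := Monoid.isComLaw.Build R 0 Rplus
  (fun a b c => esym (Rplus_assoc a b c)) Rplus_comm Rplus_0_l.

Section RealSums.
Variables (I : Type) (r : seq I) (P : pred I).

Lemma ler_sumR (F G : I -> R) :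
  (forall i, P i -> F i <= G i) ->
  \big[Rplus/0]_(i <- r | P i) F i <= \big[Rplus/0]_(i <- r | P i) G i.
Proof. by move=> FG; apply: big_ind2 => [|*|]; [lra | lra | exact: FG]. Qed.

Lemma sumR_ge0 (F : I -> R) :
  (forall i, P i -> 0 <= F i) -> 0 <= \big[Rplus/0]_(i <- r | P i) F i.
Proof. by move=> F0; apply: big_ind => [|*|]; [lra | lra | exact: F0]. Qed.

Lemma Rabs_sumR (F : I -> R) :
  Rabs (\big[Rplus/0]_(i <- r | P i) F i) <= \big[Rplus/0]_(i <- r | P i) Rabs (F i).
Proof.
apply: (big_rec2 (fun a b => Rabs a <= b)); first by rewrite Rabs_R0; lra.
by move=> i a b _ ab; apply: Rle_trans (Rabs_triang _ _) _; lra.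
Qed.

Lemma mulR_sumr (c : R) (F : I -> R) :
  \big[Rplus/0]_(i <- r | P i) (c * F i) = c * \big[Rplus/0]_(i <- r | P i) F i.
Proof. by apply: (big_rec2 (fun a b => a = c * b)) => [|i a b _ ->]; ring. Qed.

End RealSums.

Lemma iter_Rplus (k : nat) (c : R) : iter k (Rplus c) 0 = INR k * c.
Proof. by elim: k => [|k IH]; rewrite ?iterS ?IH ?S_INR /=; ring. Qed.

Lemma sumR_const (n : nat) (c : R) : \big[Rplus/0]_(i < n) c = INR n * c.
Proof. by rewrite big_const_ord iter_Rplus. Qed.

Lemma sumR_ge_term (T : finType) (F : T -> R) (j : T) :
  (forall i, 0 <= F i) -> F j <= \big[Rplus/0]_(i : T) F i.
Proof.
move=> F0; rewrite (bigD1 j) //=.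
by have := @sumR_ge0 _ (index_enum T) (fun i => i != j) F (fun i _ => F0 i); lra.
Qed.

Lemma In_of_mem (T : eqType) (s : seq T) (x : T) : x \in s -> List.In x s.
Proof.
by elim: s => //= a s IH; rewrite in_cons => /orP [/eqP ->|/IH]; [left | right].
Qed.

Section UniformBound.
Variables (T : Type) (P : T -> R -> Prop).
Hypothesis P_mono : forall i C C', C <= C' -> P i C -> P i C'.
Hypothesis P_ex : forall i, exists C, P i C.

Lemma list_uniform_bound (s : list T) :
  exists C, 0 <= C /\ forall i, List.In i s -> P i C.
Proof.
elim: s => [|a s [C [C0 HC]]]; first by exists 0; split; [lra|].
have [Ca Ha] := P_ex a.
exists (Rmax C Ca); split; first exact: Rle_trans C0 (Rmax_l _ _).
move=> i /= [<-|Hi]; first exact: P_mono (Rmax_r _ _) Ha.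
exact: P_mono (Rmax_l _ _) (HC i Hi).
Qed.

End UniformBound.

Lemma fin_uniform_bound (T : finType) (P : T -> R -> Prop) :
  (forall i C C', C <= C' -> P i C -> P i C') -> (forall i, exists C, P i C) ->
  exists C, 0 <= C /\ forall i, P i C.
Proof.
move=> P_mono P_ex; have [C [C0 HC]] := list_uniform_bound P_mono P_ex (enum T).
by exists C; split=> // i; apply/HC/In_of_mem; rewrite mem_enum.
Qed.

Lemma fin_upper_bound (T : finType) (F : T -> R) : exists C, 0 <= C /\ forall i, F i <= C.
Proof.
apply: (fin_uniform_bound (P := fun i C => F i <= C)) => [i C C' *|i]; first lra.
by exists (F i); lra.
Qed.

Lemma fin_argmax (T : finType) (F : T -> R) (i0 : T) : exists j, forall i, F i <= F j.
Proof.
suff [j Hj] : exists j, forall i, i \in enum T -> F i <= F j.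
  by exists j => i; apply: Hj; rewrite mem_enum.
elim: (enum T) => [|a s [j Hj]]; first by exists i0.
case: (Rle_dec (F a) (F j)) => [aj|ja]; [exists j | exists a] => i;
  rewrite in_cons => /orP [/eqP ->|/Hj]; lra.
Qed.

Section Weights.
Variables (m : nat) (E : nat -> 'I_m -> 'I_m -> bool).

Lemma outdeg_gt0 t j : 0 < INR (outdeg E t j).
Proof. by apply/lt_0_INR/ltP/card_gt0P; exists j; rewrite inE eqxx orbT. Qed.

Lemma W_ge0 t i j : 0 <= W E t i j.
Proof. by rewrite /W; case: ifP => _; [apply/Rlt_le/Rinv_0_lt_compat/outdeg_gt0 | lra]. Qed.

Lemma W_ge_invm t i j : j \in in_nbrs E t i -> / INR m <= W E t i j.
Proof.
move=> ji; rewrite /W ji; apply: Rinv_le_contravar; first exact: outdeg_gt0.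
apply/le_INR/leP; rewrite -{2}[m]card_ord; exact: max_card.
Qed.

Lemma W_colsum t j : \big[Rplus/0]_(i : 'I_m) W E t i j = 1.
Proof.
rewrite /W -big_mkcond /= big_const iter_Rplus.
have -> : #|[pred i | j \in in_nbrs E t i]| = outdeg E t j.
  by apply: eq_card => i; rewrite !inE [i == j]eq_sym.
exact/Rinv_r/Rgt_not_eq/outdeg_gt0.
Qed.

End Weights.

Lemma connect_cut_edge (T : finType) (e : rel T) (S : {set T}) (a c : T) :
  connect e a c -> a \in S -> c \notin S ->
  exists a' c', [/\ a' \in S, c' \notin S & e a' c'].
Proof.
move=> /connectP [q Hq ->] {c}; elim: q a Hq => [|y q IH] a /=; first by move=> _ ->.
move=> /andP [ay Hq] aS lastS; case yS: (y \in S); first exact: IH Hq yS lastS.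
by exists a, y; rewrite yS.
Qed.

Section PushSumWeights.
Variables (m B : nat) (E : nat -> 'I_m -> 'I_m -> bool) (rho : 'I_m -> nat -> R).
Hypothesis m_gt0 : (0 < m)%nat.
Hypothesis rho0 : forall i, rho i 0%nat = 1.
Hypothesis rhoS : forall i t, rho i t.+1 = vsum (fun j => W E t i j * rho j t).

Let delta := / INR m.

Lemma delta_gt0 : 0 < delta.
Proof. exact/Rinv_0_lt_compat/lt_0_INR/ltP. Qed.

Lemma delta_pow_ge0 n : 0 <= delta ^ n.
Proof. exact/pow_le/Rlt_le/delta_gt0. Qed.

Lemma delta_pow_antitone a b : (a <= b)%nat -> delta ^ b <= delta ^ a.
Proof.
move=> ab; rewrite -(subnKC ab) pow_add -{2}(Rmult_1_r (delta ^ a)).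
apply: Rmult_le_compat_l; first exact: delta_pow_ge0.
rewrite -(pow1 (b - a)); apply: pow_incr; split; first exact/Rlt_le/delta_gt0.
rewrite -Rinv_1; apply: Rinv_le_contravar; first lra.
by apply/(le_INR 1)/leP.
Qed.

Lemma rho_ge0 t i : 0 <= rho i t.
Proof.
elim: t i => [|t IH] i; first by rewrite rho0; lra.
by rewrite rhoS; apply: sumR_ge0 => j _; apply: Rmult_le_pos; [exact: W_ge0 | exact: IH].
Qed.

Lemma rho_sum t : \big[Rplus/0]_(i : 'I_m) rho i t = INR m.
Proof.
elim: t => [|t IH].
  by rewrite (eq_bigr (fun _ => 1)) ?sumR_const ?Rmult_1_r // => i _; rewrite rho0.
rewrite (eq_bigr (fun i => \big[Rplus/0]_(j : 'I_m) (rho j t * W E t i j))); last first.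
  by move=> i _; rewrite rhoS; apply: eq_bigr => j _; rewrite Rmult_comm.
rewrite exchange_big /= -IH; apply: eq_bigr => j _.
by rewrite mulR_sumr W_colsum Rmult_1_r.
Qed.

Lemma exists_rho_ge1 t : exists j, 1 <= rho j t.
Proof.
have [j jmax] := fin_argmax (fun i => rho i t) (Ordinal m_gt0).
exists j; have m0 : 0 < INR m by exact/lt_0_INR/ltP.
have : INR m <= INR m * rho j t.
  by rewrite -{1}(rho_sum t) -sumR_const; apply: ler_sumR => i _; apply: jmax.
nra.
Qed.

Lemma rho_mix t i j : j \in in_nbrs E t i -> delta * rho j t <= rho i t.+1.
Proof.
move=> ji; rewrite rhoS /vsum.
have F0 k : 0 <= W E t i k * rho k t by exact/Rmult_le_pos/rho_ge0/W_ge0.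
apply: (Rle_trans _ _ _ _ (sumR_ge_term j F0)).
exact/Rmult_le_compat_r/W_ge_invm/ji/rho_ge0.
Qed.

Lemma rho_decay t r i : delta ^ r * rho i t <= rho i (t + r).
Proof.
elim: r => [|r IH]; first by rewrite addn0 /=; lra.
have ii : i \in in_nbrs E (t + r) i by rewrite inE eqxx orbT.
rewrite addnS /= Rmult_assoc; apply: (Rle_trans _ _ _ _ (rho_mix ii)).
by apply: Rmult_le_compat_l => //; exact/Rlt_le/delta_gt0.
Qed.

Lemma rho_window_step k a c :
  (a == c) || window_rel E B k a c -> delta ^ B * rho a (k * B) <= rho c (k.+1 * B).
Proof.
rewrite mulSnr; case/orP => [/eqP <-|/existsP [l ac]]; first exact: rho_decay.
have lB := ltn_ord l.
have -> : (k * B + B = (k * B + l).+1 + (B - l.+1))%nat by lia.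
apply: (Rle_trans _ _ _ _ (rho_decay _ _ _)).
have -> : delta ^ B = delta ^ (B - l.+1) * (delta * delta ^ l).
  by rewrite tech_pow_Rmult -pow_add; congr (_ ^ _); lia.
rewrite !Rmult_assoc; apply: Rmult_le_compat_l; first exact: delta_pow_ge0.
have ac' : a \in in_nbrs E (k * B + l) c by rewrite inE ac.
apply: (Rle_trans _ _ _ _ (rho_mix ac')).
apply: Rmult_le_compat_l; [exact/Rlt_le/delta_gt0 | exact: rho_decay].
Qed.

Hypothesis window_connected : forall k, strongly_connected (window_rel E B k).

(* A window that is strongly connected has an edge leaving [S] unless [S] is everything,
   so [S] gains a node per window. *)
Lemma rho_spread k j l : exists S : {set 'I_m},
  [/\ j \in S, (minn l.+1 m <= #|S|)%nat &
      forall i, i \in S -> delta ^ (l * B) * rho j (k * B) <= rho i ((k + l) * B)].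
Proof.
elim: l => [|l [S [jS cardS HS]]].
  exists [set j]; rewrite set11 cards1; split=> [||i /set1P ->] //; first lia.
  by rewrite addn0 /=; lra.
have grow i c : i \in S -> (i == c) || window_rel E B (k + l) i c ->
    delta ^ (l.+1 * B) * rho j (k * B) <= rho c ((k + l.+1) * B).
  move=> iS ic; rewrite addnS mulSn pow_add Rmult_assoc.
  apply: (Rle_trans _ _ _ _ (rho_window_step ic)).
  exact/Rmult_le_compat_l/HS/iS/delta_pow_ge0.
have [c cS|full] := pickP [pred c | c \notin S]; last first.
  exists S; split=> // [|i iS]; last by apply: grow iS _; rewrite eqxx.
  suff -> : #|S| = m by lia.
  by rewrite -[RHS]card_ord; apply/eq_card => i; have /negbFE -> := full i.
have [a' [c' [a'S c'S ac']]] := connect_cut_edge (window_connected (k + l) j c) jS cS.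
exists (c' |: S); split=> [||i /setU1P [->|iS]].
- by rewrite setU1r.
- by rewrite cardsU1 c'S; lia.
- by apply: grow a'S _; rewrite ac' orbT.
- by apply: grow iS _; rewrite eqxx.
Qed.

Lemma rho_lower_bound : (0 < B)%nat -> exists c, 0 < c /\ forall i t, c <= rho i t.
Proof.
move=> B_gt0; exists (delta ^ (m * B)); split=> [|i t]; first exact/pow_lt/delta_gt0.
suff [s [smB Hs]] : exists s, (s <= m * B)%nat /\ delta ^ s <= rho i t.
  exact: Rle_trans (delta_pow_antitone smB) Hs.
have [t_small|t_large] := ltnP t (m.-1 * B).
  exists t; split; first nia.
  by have := rho_decay 0%nat t i; rewrite rho0 Rmult_1_r.
have q_large : (m.-1 <= t %/ B)%nat by rewrite leq_divRL.
set k := (t %/ B - m.-1)%nat.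
have [j j1] := exists_rho_ge1 (k * B).
have [S [_ cardS HS]] := rho_spread k j m.-1.
have iS : i \in S.
  have /eqP -> : S == setT by rewrite eqEcard subsetT cardsT card_ord; lia.
  by rewrite inE.
exists (t %% B + m.-1 * B)%nat; split.
  by have := ltn_pmod t B_gt0; nia.
have Et : ((k + m.-1) * B + t %% B)%nat = t by rewrite /k subnK // -divn_eq.
have := rho_decay ((k + m.-1) * B) (t %% B) i; rewrite Et pow_add; apply: Rle_trans.
apply: Rmult_le_compat_l; first exact: delta_pow_ge0.
apply: (Rle_trans _ _ _ _ (HS i iS)); have := delta_pow_ge0 (m.-1 * B); nra.
Qed.

End PushSumWeights.

Lemma Rabs_le_vnorm (n : nat) (v : vec n) (k : 'I_n) : Rabs (v k) <= vnorm v.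
Proof.
rewrite -sqrt_Rsqr_abs /vnorm /dot /vsum; apply: sqrt_le_1_alt.
by rewrite /Rsqr; apply: sumR_ge_term => c; nra.
Qed.

Definition l1norm (n : nat) (y : vec n) : R := vsum (fun c => Rabs (y c)).

Lemma open_l1_ball (n : nat) (r : R) : Defs.open_set (fun y : vec n => l1norm y < r).
Proof.
move=> y yr; have n1 : 0 < INR n + 1 by have := pos_INR n; lra.
set eps := (r - l1norm y) / (INR n + 1).
have eps0 : 0 < eps by apply: Rdiv_lt_0_compat; lra.
exists eps; split=> // z zy.
have : l1norm z <= l1norm y + INR n * eps.
  rewrite /l1norm /vsum -sumR_const -big_split /=; apply: ler_sumR => c _.
  have := Rle_lt_trans _ _ _ (Rabs_le_vnorm (vsub z y) c) zy; rewrite /vsub.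
  have := Rabs_triang_inv (z c) (y c); lra.
have -> : r = l1norm y + (INR n + 1) * eps by rewrite /eps; field; lra.
nra.
Qed.

Lemma compact_l1_bounded (n : nat) (X : vec n -> Prop) :
  compact_set X -> exists K, forall y, X y -> l1norm y <= K.
Proof.
move=> Xc; have [||l cover] := Xc nat (fun k y => l1norm y < INR k).
- by move=> k; apply: open_l1_ball.
- by move=> y _; have [k yk] := INR_unbounded (l1norm y); exists k.
have [||K [_ lK]] := list_uniform_bound (P := fun k C => INR k <= C) _ _ l.
- by move=> k C C'; lra.
- by move=> k; exists (INR k); lra.
exists K => y /cover [k [kl yk]]; have := lK k kl; lra.
Qed.

Lemma compact_affine_bounded (n p : nat) (X : vec n -> Prop)
    (A : 'I_p -> 'I_n -> R) (b : vec p) :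
  compact_set X -> exists G, forall y, X y -> forall k, Rabs (matvec A y k - b k) <= G.
Proof.
move=> /compact_l1_bounded [K XK].
have [Amax [Amax0 HA]] := fin_upper_bound (fun kc : 'I_p * 'I_n => Rabs (A kc.1 kc.2)).
have [bmax [_ Hb]] := fin_upper_bound (fun k => Rabs (b k)).
exists (Amax * K + bmax) => y Xy k.
apply: Rle_trans (Rabs_triang _ _) _; rewrite Rabs_Ropp.
apply: Rplus_le_compat; last exact: Hb.
apply: Rle_trans (Rabs_sumR _ _ _) _.
apply: (Rle_trans _ (vsum (fun c => Amax * Rabs (y c)))).
  apply: ler_sumR => c _; rewrite Rabs_mult.
  exact/Rmult_le_compat_r/(HA (k, c))/Rabs_pos.
rewrite /vsum mulR_sumr; apply: Rmult_le_compat_l; [exact: Amax0 | exact: XK].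
Qed.

(* [rho l + beta (g - gamma l) = (rho - beta gamma) l + beta g] is a combination of [l]
   and [g / gamma] with nonnegative weights summing to [rho]. *)
Lemma Rabs_dual_update (rho beta gamma l g M : R) :
  0 <= beta -> beta * gamma <= rho -> Rabs l <= M -> Rabs g <= M * gamma ->
  Rabs (rho * l + beta * (g - gamma * l)) <= M * rho.
Proof.
move=> beta0 bg lM gM.
have -> : rho * l + beta * (g - gamma * l) = (rho - beta * gamma) * l + beta * g by ring.
apply: Rle_trans (Rabs_triang _ _) _.
rewrite !Rabs_mult (Rabs_pos_eq (rho - _)) ?(Rabs_pos_eq beta); try lra.
have : (rho - beta * gamma) * Rabs l <= (rho - beta * gamma) * M.
  by apply: Rmult_le_compat_l; lra.
have : beta * Rabs g <= beta * (M * gamma) by apply: Rmult_le_compat_l.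
nra.
Qed.

Section DualIterates.
Variables (m p : nat) (E : nat -> 'I_m -> 'I_m -> bool).
Variables (beta : nat -> R) (gamma : 'I_m -> R) (rho : 'I_m -> nat -> R).
Variables (theta u lam g : 'I_m -> nat -> vec p) (c G : R).
Hypothesis gamma_gt0 : forall i, 0 < gamma i.
Hypothesis beta_gt0 : forall t, (0 < t)%nat -> 0 < beta t.
Hypothesis beta_cvg0 : Un_cv beta 0.
Hypothesis c_gt0 : 0 < c.
Hypothesis rho_ge : forall i t, c <= rho i t.
Hypothesis g_bounded : forall i t k, Rabs (g i t.+1 k) <= G.
Hypothesis rhoS : forall i t, rho i t.+1 = vsum (fun j => W E t i j * rho j t).
Hypothesis uS : forall i t k, u i t.+1 k = vsum (fun j => W E t i j * theta j t k).
Hypothesis lamS : forall i t k, lam i t.+1 k = u i t.+1 k / rho i t.+1.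
Hypothesis thetaS : forall i t k,
  theta i t.+1 k = u i t.+1 k + beta t.+1 * (g i t.+1 k - gamma i * lam i t.+1 k).

Lemma rho_gt0 i t : 0 < rho i t.
Proof. exact: Rlt_le_trans c_gt0 (rho_ge i t). Qed.

Lemma lam_mix_bound t i k M :
  (forall j, Rabs (theta j t k) <= M * rho j t) -> Rabs (lam i t.+1 k) <= M.
Proof.
move=> thetaM; have rho_i := rho_gt0 i t.+1.
rewrite lamS /Rdiv Rabs_mult Rabs_inv (Rabs_pos_eq (rho i _)); last lra.
apply: (Rmult_le_reg_r (rho i t.+1)) => //.
rewrite Rmult_assoc Rinv_l; last lra.
rewrite Rmult_1_r uS rhoS /vsum -mulR_sumr; apply: Rle_trans (Rabs_sumR _ _ _) _.
apply: ler_sumR => j _; rewrite Rabs_mult (Rabs_pos_eq (W _ _ _ _)); last exact: W_ge0.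
rewrite (Rmult_comm M) Rmult_assoc; apply: Rmult_le_compat_l; first exact: W_ge0.
by rewrite Rmult_comm.
Qed.

Lemma theta_bound t j k M :
  0 <= beta t.+1 -> beta t.+1 * gamma j <= rho j t.+1 ->
  Rabs (lam j t.+1 k) <= M -> G <= M * gamma j ->
  Rabs (theta j t.+1 k) <= M * rho j t.+1.
Proof.
move=> beta0 bg lamM GM; rewrite thetaS.
have -> : u j t.+1 k = rho j t.+1 * lam j t.+1 k.
  by rewrite lamS; field; have := rho_gt0 j t.+1; lra.
apply: Rabs_dual_update => //.
exact: Rle_trans (g_bounded j t k) GM.
Qed.

(* The only use of [beta t -> 0]: from time [T] on, [Rabs_dual_update] applies. *)
Lemma beta_gamma_le_rho_eventually : exists T, forall t, (T <= t)%nat ->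
  0 < beta t.+1 /\ forall j, beta t.+1 * gamma j <= rho j t.+1.
Proof.
have [Gm [Gm0 gammaGm]] := fin_upper_bound gamma.
set eps := c / (Gm + 1).
have eps0 : 0 < eps by apply: Rdiv_lt_0_compat; lra.
have [N HN] := beta_cvg0 eps0.
exists N => t Nt; have beta0 := beta_gt0 (ltn0Sn t); split=> // j.
have : beta t.+1 < eps.
  by have := HN t.+1 ltac:(lia); rewrite /R_dist Rminus_0_r Rabs_pos_eq; lra.
have epsGm : eps * (Gm + 1) = c by rewrite /eps; field; lra.
have := gammaGm j; have := gamma_gt0 j; have := rho_ge j t.+1; nra.
Qed.

Lemma lam_bounded : exists M, 0 <= M /\ forall i t k, Rabs (lam i t k) <= M.
Proof.
have [T HT] := beta_gamma_le_rho_eventually.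
have [M0 [M00 HM0]] : exists M0, 0 <= M0 /\
    forall t, (t <= T.+1)%nat -> forall i k, Rabs (lam i t k) <= M0.
  have [||M0 [M00 HM0]] := list_uniform_bound
    (P := fun t C => forall i k, Rabs (lam i t k) <= C) _ _ (iota 0 T.+2).
  - by move=> t C C' CC' H i k; apply: Rle_trans (H i k) CC'.
  - move=> t; have [C [_ HC]] :=
      fin_upper_bound (fun ik : 'I_m * 'I_p => Rabs (lam ik.1 t ik.2)).
    by exists C => i k; apply: (HC (i, k)).
  by exists M0; split=> // t tT; apply/HM0/In_of_mem; rewrite mem_iota; lia.
have [MG [_ HMG]] := fin_upper_bound (fun j => G / gamma j).
set M := Rmax M0 MG.
have GM j : G <= M * gamma j.
  have gj := gamma_gt0 j.
  have -> : G = G / gamma j * gamma j by field; lra.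
  exact/Rmult_le_compat_r/(Rle_trans _ _ _ (HMG j) (Rmax_r _ _))/Rlt_le.
exists M; split; first exact: Rle_trans M00 (Rmax_l _ _).
suff lam_late d i k : Rabs (lam i (T.+1 + d) k) <= M.
  move=> i t k; case: (leqP t T.+1) => tT.
    exact: Rle_trans (HM0 t tT i k) (Rmax_l _ _).
  by rewrite -(subnKC (ltnW tT)); apply: lam_late.
elim: d i k => [|d IH] i k.
  by rewrite addn0; apply: Rle_trans (HM0 _ (leqnn _) i k) (Rmax_l _ _).
rewrite addnS; apply: lam_mix_bound => j.
have [beta0 bg] := HT (T + d)%nat (leq_addr _ _).
apply: theta_bound; [exact: Rlt_le beta0 | exact: bg | exact: IH | exact: GM].
Qed.

End DualIterates.

Lemma vnorm_le (n : nat) (v : vec n) (M : R) :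
  0 <= M -> (forall k, Rabs (v k) <= M) -> vnorm v <= sqrt (INR n) * M.
Proof.
move=> M0 vM; rewrite -(sqrt_square M M0) -sqrt_mult; [|exact: pos_INR|nra].
apply: sqrt_le_1_alt; rewrite /dot /vsum -sumR_const; apply: ler_sumR => k _.
have := Rsqr_abs (v k); rewrite /Rsqr => ->.
by have := vM k; have := Rabs_pos (v k); nra.
Qed.

Theorem theorem1
  (m p : nat) (n : 'I_m -> nat)
  (f : forall i : 'I_m, vec (n i) -> R)
  (X : forall i : 'I_m, vec (n i) -> Prop)
  (A : forall i : 'I_m, 'I_p -> 'I_(n i) -> R)
  (b : 'I_m -> vec p)
  (gamma tau : 'I_m -> R)
  (E : nat -> 'I_m -> 'I_m -> bool) (B : nat)
  (beta : nat -> R)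
  (theta u lam : 'I_m -> nat -> vec p) (rho : 'I_m -> nat -> R)
  (x : forall i : 'I_m, nat -> vec (n i)) :
  (forall i, 0 < gamma i) ->
  (* Assumption A1 *)
  (forall i, 0 < tau i) ->
  (forall i, strongly_convex (tau i) (f i)) ->
  (forall i, nonempty_set (X i) /\ convex_set (X i) /\ compact_set (X i)) ->
  (* Assumption A2 *)
  (0 < B)%nat ->
  (forall k : nat, strongly_connected (window_rel E B k)) ->
  (forall t : nat, (0 < t)%nat -> 0 < beta t) ->
  (forall t : nat, (0 < t)%nat -> beta (S t) <= beta t) ->
  Un_cv beta 0 ->
  (* Algorithm DRDGA (theta_i[0] arbitrary) *)
  (forall i, rho i 0%nat = 1) ->
  (forall i t k, u i (S t) k = vsum (fun j : 'I_m => W E t i j * theta j t k)) ->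
  (forall i t, rho i (S t) = vsum (fun j : 'I_m => W E t i j * rho j t)) ->
  (forall i t k, lam i (S t) k = u i (S t) k / rho i (S t)) ->
  (forall i t, is_argmin (X i)
      (fun y => lagr (f i) (A i) (b i) (gamma i) y (lam i (S t))) (x i (S t))) ->
  (forall i t k, theta i (S t) k =
      u i (S t) k + beta (S t) * (matvec (A i) (x i (S t)) k - b i k
                                  - gamma i * lam i (S t) k)) ->
  exists D : R, 0 < D /\
    forall (i : 'I_m) (t : nat), (0 < t)%nat -> vnorm (lam i t) <= D.
Proof.
move=> gamma_gt0 _ _ HX B_gt0 conn beta_gt0 _ beta_cvg0 rho0 uS rhoS lamS x_argmin thetaS.
have [m0|m_gt0] := posnP m.
  by exists 1; split=> [|i]; [lra | have := ltn_ord i; rewrite {2}m0].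
have [c [c_gt0 rho_ge]] := rho_lower_bound m_gt0 rho0 rhoS conn B_gt0.
have [G [_ HG]] := fin_uniform_bound (P := fun i G => forall y, X i y ->
    forall k, Rabs (matvec (A i) y k - b i k) <= G)
  (fun i G G' GG' H y Xy k => Rle_trans _ _ _ (H y Xy k) GG')
  (fun i => compact_affine_bounded (A i) (b i) (HX i).2.2).
have [M [M0 lamM]] := lam_bounded (g := fun i t k => matvec (A i) (x i t) k - b i k)
  gamma_gt0 beta_gt0 beta_cvg0 c_gt0 rho_ge (fun i t => HG i _ (x_argmin i t).1)
  rhoS uS lamS thetaS.
exists (sqrt (INR p) * M + 1); split; first by have := sqrt_pos (INR p); nra.
by move=> i t _; have := vnorm_le M0 (lamM i t); lra.
Qed.
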